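(* Let $k\ge 2$, let $\epsilon>0$ and let $1\le r<k$. For all sufficiently large $n$ (as a function of $\epsilon$ and $k$), for $T\sim\mathcal{R}(n,k)$ the probability that there exist a permutation $\pi$ of $V(T)$, a perfect $r$-set $P$, a subset $R\subseteq P$ with $|R|\ge\epsilon n$ and a subset $S\subseteq A_{r+1}$ with $|S|\ge \epsilon n$ such that the event $X(T,\pi,P,R,S)$ occurs, is at most $\frac{1}{kn}$.
   Context: $\mathcal{R}(n,k)$ is the probability space of $k$-partite tournaments with vertex classes $A_1,\ldots,A_k$ of size $n$ each, every edge between distinct classes oriented independently and uniformly at random. For a permutation (bijection) $\pi:V(T)\to\{1,\ldots,kn\}$, $L_\pi(T)$ is the spanning subgraph of $T$ consisting of all edges $(u,v)\in E(T)$ with $\pi(u)<\pi(v)$, viewed as undirected. For $1\le r\le k$, a perfect $r$-set is a set $P$ of $n$ pairwise disjoint $r$-tuples $(a_1,\ldots,a_r)$ with $a_i\in A_i$ for each $i$. For $1\le r<k$, a perfect $r$-set $P$ and $\pi$, $L_\pi(P,T)$ is the bipartite graph with parts $P$ and $A_{r+1}$ in which $p=(a_1,\ldots,a_r)\in P$ and $v\in A_{r+1}$ are adjacent iff $\{v,a_i\}$ is an edge of $L_\pi(T)$ for every $i=1,\ldots,r$. For $R\subseteq P$ and $S\subseteq A_{r+1}$, $X(T,\pi,P,R,S)$ is the event that $L_\pi(P,T)$ has fewer than $|R||S|/2^{r+1}$ edges between $R$ and $S$. *)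

From HB Require Import structures.
From mathcomp Require Import all_boot all_order all_algebra.
From mathcomp Require Import reals.
Set Implicit Arguments. Unset Strict Implicit. Unset Printing Implicit Defensive.
Import Order.TTheory GRing.Theory Num.Theory.

(* Vertices of the k-partite tournament: vertex (i, j) is the j-th vertex of
   class A_i (classes indexed 0..k-1, so A_1,...,A_k of the paper are
   indices 0,...,k-1). *)
Definition vert (k n : nat) := ('I_k * 'I_n)%type.

(* Unordered pairs of vertices in distinct classes, represented by the
   ordered pair whose first vertex lies in the smaller class. *)
Definition xpair (k n : nat) :=
  {p : vert k n * vert k n | (nat_of_ord p.1.1 < nat_of_ord p.2.1)%N}.

(* Sample space of R(n,k): an orientation bit for each such pair,
   true meaning the edge is oriented from p.1 to p.2.  The uniform
   distribution on this finite set is exactly the product of independent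
   fair orientations. *)
Definition orient (k n : nat) := {ffun xpair k n -> bool}.

Definition arc k n (T : orient k n) (u v : vert k n) : bool :=
  match insub (u, v) : option (xpair k n) with
  | Some p => T p
  | None =>
      match insub (v, u) : option (xpair k n) with
      | Some q => ~~ T q
      | None => false
      end
  end.

(* {u,v} is an edge of L_pi(T). pi : V(T) -> {1..kn} bijection, encoded as
   an injective map into 'I_(k*n) (0-based, order preserved). *)
Definition Ledge k n (T : orient k n) (pi : {ffun vert k n -> 'I_(k * n)})
  (u v : vert k n) : bool :=
  (arc T u v && (pi u < pi v)%N) || (arc T v u && (pi v < pi u)%N).

(* An r-tuple (a_1,...,a_r) with a_i in A_i is encoded by the indices of
   the a_i inside their classes. *)
Definition rtuple (r n : nat) := {ffun 'I_r -> 'I_n}.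

Definition rcls (k r : nat) (hrk : (r < k)%N) (i : 'I_r) : 'I_k :=
  widen_ord (ltnW hrk) i.

Definition vtx_of_tuple k n r (hrk : (r < k)%N) (p : rtuple r n) (i : 'I_r)
  : vert k n := (rcls hrk i, p i).

Definition perfect_rset (r n : nat) (P : {set rtuple r n}) : bool :=
  (#|P| == n) &&
  [forall p in P, forall q in P, (p != q) ==> [forall i, p i != q i]].

Definition nextcls (k r : nat) (hrk : (r < k)%N) : 'I_k := Ordinal hrk.

Definition Ladj k n r (hrk : (r < k)%N) (T : orient k n)
  (pi : {ffun vert k n -> 'I_(k * n)}) (p : rtuple r n) (j : 'I_n) : bool :=
  [forall i : 'I_r, Ledge T pi (vtx_of_tuple hrk p i) (nextcls hrk, j)].

Definition edges_between k n r (hrk : (r < k)%N) (T : orient k n)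
  (pi : {ffun vert k n -> 'I_(k * n)}) (R : {set rtuple r n}) (S : {set 'I_n})
  : nat :=
  #|[set x : rtuple r n * 'I_n | (x.1 \in R) && (x.2 \in S) && Ladj hrk T pi x.1 x.2]|.

(* the event X(T,pi,P,R,S) (P is implicit: R is a subset of P) *)
Definition eventX (RR : realType) k n r (hrk : (r < k)%N) (T : orient k n)
  (pi : {ffun vert k n -> 'I_(k * n)}) (R : {set rtuple r n}) (S : {set 'I_n})
  : bool :=
  ((edges_between hrk T pi R S)%:R < (#|R| * #|S|)%:R / 2 ^+ r.+1 :> RR)%R.

Definition bad (RR : realType) (eps : RR) k n r (hrk : (r < k)%N)
  (T : orient k n) : bool :=
  [exists pi : {ffun vert k n -> 'I_(k * n)},
   [exists P : {set rtuple r n},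
    [exists R : {set rtuple r n},
     [exists S : {set 'I_n},
      [&& injectiveb pi, perfect_rset P, R \subset P,
          (eps * n%:R <= #|R|%:R)%R, (eps * n%:R <= #|S|%:R)%R
        & eventX RR hrk T pi R S]]]]].

Definition prob (RR : realType) k n (E : pred (orient k n)) : RR :=
  (#|[set T : orient k n | E T]|%:R / #|{: orient k n}|%:R)%R.

From Pilot Require Import Defs.
From mathcomp Require Import all_boot all_order all_algebra.
From mathcomp Require Import reals.
From mathcomp Require Import zify ring lra.
Import Order.TTheory GRing.Theory Num.Theory.

Set Implicit Arguments.
Unset Strict Implicit.
Unset Printing Implicit Defensive.

Local Open Scope ring_scope.

(* Let pi, a set R of pairwise disjoint r-tuples and S be fixed. For (p, v) in
   R x S, whether p and v are adjacent in L_pi(P,T) is decided by the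
   orientations of the r edges between v and the entries of p; these edge sets
   are pairwise disjoint, so the |R||S| adjacencies are independent events of
   probability 2^-r. Markov's inequality for (2/3)^X, X the number of
   adjacencies, bounds the probability of X(T,pi,P,R,S) by
   (9/10)^(|R||S|/2^(r+1)), that is 2^-Omega(n^2) when |R|, |S| >= eps n.
   A set of disjoint tuples is determined by the map sending j in A_1 to the
   tuple starting with j, so there are only 2^O(n log n) choices of
   (pi, R, S), and the union bound concludes. *)

Lemma bernoulli_le (R : realDomainType) (y : R) (N : nat) :
  0 <= y -> 1 + N%:R * y <= (1 + y) ^+ N.
Proof.
move=> y_ge0; elim: N => [|N IH]; first by rewrite mul0r addr0.
rewrite exprS -natr1 mulrDl mul1r.
have : 0 <= N%:R * y by rewrite mulr_ge0 ?ler0n.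
nra.
Qed.

Lemma one_sub_inv3_expr_le (R : realFieldType) (N : nat) : (0 < N)%N ->
  (1 - (3 * N%:R)^-1) ^+ (2 * N) <= 3 / 5 :> R.
Proof.
move=> N_gt0; set y : R := (3 * N%:R)^-1.
have N_ge1 : 1 <= N%:R :> R by rewrite ler1n.
have y_ge0 : 0 <= y by rewrite invr_ge0 mulr_ge0 ?ler0n.
have y_le : y <= 1 / 3.
  by rewrite /y mul1r lef_pV2 ?posrE ?mulr_gt0 //; lra.
have := bernoulli_le (2 * N) y_ge0.
rewrite (_ : (2 * N)%:R * y = 2 / 3); last by rewrite natrM /y; field; lra.
have : ((1 - y) * (1 + y)) ^+ (2 * N) <= 1 by apply: exprn_ile1; nra.
have : 0 <= (1 - y) ^+ (2 * N) by rewrite exprn_ge0 // subr_ge0; lra.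
rewrite exprMn; nra.
Qed.

Lemma card_le_sum_cover (A B : finType) (P : B -> pred A) (Q : pred A) :
  (forall x, Q x -> exists y, P y x) ->
  (#|[set x | Q x]| <= \sum_y #|[set x | P y x]|)%N.
Proof.
move=> cover; rewrite -sum1_card big_mkcond /=.
under [X in (_ <= X)%N]eq_bigr do rewrite -sum1_card big_mkcond /=.
rewrite exchange_big /=; apply: leq_sum => x _; rewrite inE.
by case: ifP => // /cover [y Pyx]; rewrite (bigD1 y) //= inE Pyx leq_addr.
Qed.

Lemma leq_mul_of_eps_le (R : realDomainType) (eps : R) (d m n : nat) :
  1 <= d%:R * eps -> eps * n%:R <= m%:R -> (n <= d * m)%N.
Proof.
move=> d_eps eps_n; rewrite -(ler_nat R) natrM.
apply: le_trans (_ : d%:R * (eps * n%:R) <= _); last by rewrite ler_wpM2l ?ler0n.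
by rewrite mulrA ler_peMl ?ler0n.
Qed.

Lemma sq_div_leq_mul_div (n r d a b : nat) :
  (0 < d)%N -> (n <= d * a)%N -> (n <= d * b)%N ->
  (7 * (n ^ 2 %/ (14 * 2 ^ r * d ^ 2)) <= a * b %/ (2 * 2 ^ r))%N.
Proof.
move=> d_gt0 na nb; rewrite leq_divRL ?muln_gt0 ?expn_gt0 //.
rewrite -(leq_pmul2r (_ : 0 < d ^ 2)%N) ?expn_gt0 ?d_gt0 //.
set q := (n ^ 2 %/ _)%N.
have -> : (7 * q * (2 * 2 ^ r) * d ^ 2 = q * (14 * 2 ^ r * d ^ 2))%N by ring.
apply: leq_trans (leq_trunc_div _ _) _.
by rewrite mulnC -!mulnn mulnACA leq_mul.
Qed.

Lemma leq_exp2rW (m n e : nat) : (m <= n)%N -> (m ^ e <= n ^ e)%N.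
Proof. by case: e => [//|e] mn; rewrite leq_exp2r. Qed.

Lemma sq_leq_exp2 (q : nat) : (4 <= q)%N -> (q ^ 2 <= 2 ^ q)%N.
Proof.
move=> q_ge4; rewrite -(subnK q_ge4); elim: (q - 4)%N => [//|m IH].
rewrite addSn [(2 ^ _.+1)%N]expnS; apply: leq_trans (_ : 2 * (m + 4) ^ 2 <= _)%N.
  by rewrite !expnS !expn0 !muln1; nia.
by rewrite leq_mul2l IH orbT.
Qed.

Lemma mul_leq_exp2_div (c K n : nat) :
  (0 < K)%N -> (K * (2 * c * K + 4) <= n)%N -> (c * n <= 2 ^ (n %/ K))%N.
Proof.
move=> K_gt0 n_ge; set q := (n %/ K)%N.
have q_ge : (2 * c * K + 4 <= q)%N by rewrite leq_divRL // mulnC.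
have n_lt : (n < q.+1 * K)%N by rewrite ltn_ceil.
apply: leq_trans (sq_leq_exp2 (leq_trans (leq_addl _ _) q_ge)).
have : (c * n <= c * (q.+1 * K))%N by rewrite leq_mul2l ltnW ?orbT.
nia.
Qed.

Section RandomBits.
Variables (E : finType) (r : nat).

Definition flip_on (D : {set E}) (T : {ffun E -> bool}) : {ffun E -> bool} :=
  [ffun e => T e (+) (e \in D)].

Lemma flip_onK D : involutive (flip_on D).
Proof. by move=> T; apply/ffunP => e; rewrite !ffunE addbK. Qed.

Definition restrict (eg : 'I_r -> E) (T : {ffun E -> bool}) : {ffun 'I_r -> bool} :=
  [ffun i => T (eg i)].

(* Flipping the bits on [eg @: [pred i | x i != sg i]] is a bijection that
   turns the pattern [x] on [eg] into [sg] and does not affect [H]. *)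
Lemma sum_restrict_eq (V : nmodType) (eg : 'I_r -> E) (sg : {ffun 'I_r -> bool})
    (H : {ffun E -> bool} -> V) :
  injective eg ->
  (forall T T' : {ffun E -> bool}, (forall e, e \notin codom eg -> T e = T' e) -> H T = H T') ->
  \sum_T H T = (\sum_(T | restrict eg T == sg) H T) *+ 2 ^ r.
Proof.
move=> eg_inj H_local.
have pattern_sum (x : {ffun 'I_r -> bool}) :
    \sum_(T | restrict eg T == x) H T = \sum_(T | restrict eg T == sg) H T.
  pose D := [set eg i | i in [pred i | x i != sg i]].
  have inD i : (eg i \in D) = (x i != sg i) by rewrite mem_imset.
  rewrite (reindex_inj (inv_inj (flip_onK D))); apply: eq_big => T.
    apply/eqP/eqP => /ffunP pat; apply/ffunP => i; move: (pat i);
      rewrite !ffunE inD; by case: (x i) (sg i) (T (eg i)) => [] [] [].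
  move=> _; apply: H_local => e egN; rewrite ffunE.
  suff -> : (e \in D) = false by rewrite addbF.
  by apply: contraNF egN => /imsetP [i _ ->]; exact: codom_f.
rewrite (partition_big (restrict eg) predT) //=.
rewrite (eq_bigr (fun=> \sum_(T | restrict eg T == sg) H T)) => [|x _]; last exact: pattern_sum.
by rewrite sumr_const card_ffun card_bool card_ord.
Qed.

Lemma sum_expr_count_restrict (R : numFieldType) (G : eqType) (s : seq G)
    (eg : G -> 'I_r -> E) (sg : G -> {ffun 'I_r -> bool}) (w : R) :
  uniq s -> {in s, forall g, injective (eg g)} ->
  {in s &, forall g g' i i', eg g i = eg g' i' -> g = g'} ->
  \sum_T w ^+ count (fun g => restrict (eg g) T == sg g) s =
  #|{: {ffun E -> bool}}|%:R * (1 - (1 - w) / (2 ^ r)%:R) ^+ size s.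
Proof.
elim: s => [|g0 s IH] /=.
  by move=> _ _ _; rewrite sumr_const expr0 mulr1.
move=> /andP [g0Ns s_uniq] eg_inj eg_disj.
have sub_cons g : g \in s -> g \in g0 :: s by rewrite in_cons orbC => ->.
set X := fun T => count (fun g => restrict (eg g) T == sg g) s.
have X_local (T T' : {ffun E -> bool}) : (forall e, e \notin codom (eg g0) -> T e = T' e) ->
    w ^+ X T = w ^+ X T'.
  move=> TT'; congr (_ ^+ _); apply: eq_in_count => g gs /=.
  congr (_ == _); apply/ffunP => i; rewrite !ffunE; apply: TT'.
  apply/codomP => -[j eq_e]; move: g0Ns.
  by rewrite (eg_disj g0 g (mem_head _ _) (sub_cons _ gs) j i (esym eq_e)) gs.
have two_r_neq0 : (2 ^ r)%:R != 0 :> R by rewrite pnatr_eq0 expn_eq0.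
have sum_pattern := sum_restrict_eq (sg g0) (eg_inj g0 (mem_head _ _)) X_local.
transitivity (\sum_T (w ^+ X T - (1 - w) * (if restrict (eg g0) T == sg g0 then w ^+ X T else 0))).
  by apply: eq_bigr => T _; rewrite exprD; case: ifP => _ /=; ring.
rewrite sumrB -mulr_sumr -big_mkcond /=.
have -> : \sum_(T | restrict (eg g0) T == sg g0) w ^+ X T =
    (\sum_T w ^+ X T) / (2 ^ r)%:R.
  by rewrite sum_pattern -[(\sum_(T | _) _) *+ _]mulr_natr mulfK.
rewrite /X IH //; first by rewrite exprS; field.
  by move=> g gs; apply: eg_inj (sub_cons _ gs).
by move=> g g' gs g's; apply: eg_disj (sub_cons _ gs) (sub_cons _ g's).
Qed.

(* Markov's inequality for (2/3)^count, whose sum is computed above. *)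
Lemma card_count_restrict_le (R : realFieldType) (G : eqType) (s : seq G)
    (eg : G -> 'I_r -> E) (sg : G -> {ffun 'I_r -> bool}) (a : nat) :
  uniq s -> {in s, forall g, injective (eg g)} ->
  {in s &, forall g g' i i', eg g i = eg g' i' -> g = g'} ->
  (2 * 2 ^ r * a <= size s)%N ->
  #|[set T | (count (fun g => restrict (eg g) T == sg g) s <= a)%N]|%:R <=
  #|{: {ffun E -> bool}}|%:R * (9 / 10) ^+ a :> R.
Proof.
move=> s_uniq eg_inj eg_disj size_s.
set X := fun T => count (fun g => restrict (eg g) T == sg g) s.
set A := [set T | _].
set w : R := 2 / 3; set c : R := 1 - (3 * (2 ^ r)%:R)^-1.
have w_gt0 : 0 < w by rewrite /w; lra.
have c_ge0 : 0 <= c.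
  rewrite subr_ge0 invf_le1 ?mulr_gt0 ?ltr0n ?expn_gt0 //.
  by rewrite -natrM ler1n muln_gt0 expn_gt0.
have c_le1 : c <= 1 by rewrite gerDl oppr_le0 invr_ge0 mulr_ge0 ?ler0n.
have markov : #|A|%:R * w ^+ a <= \sum_T w ^+ X T.
  rewrite (bigID (mem A)) /= -[X in X <= _]addr0 lerD ?sumr_ge0 // => [|T _].
    rewrite -sum1_card natr_sum mulr_suml ler_sum // => T; rewrite inE => XT.
    by rewrite mul1r; apply: ler_wiXn2l => //; rewrite /w; lra.
  exact/exprn_ge0/ltW.
have moment : \sum_T w ^+ X T <= #|{: {ffun E -> bool}}|%:R * (3 / 5) ^+ a.
  rewrite sum_expr_count_restrict // ler_wpM2l // (_ : 1 - _ = c); last first.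
    by rewrite /c /w; field; rewrite pnatr_eq0 expn_eq0.
  apply: le_trans (ler_wiXn2l c_ge0 c_le1 size_s) _.
  rewrite exprM; apply: lerXn2r; rewrite ?nnegrE ?exprn_ge0 //; first lra.
  by apply: one_sub_inv3_expr_le; rewrite expn_gt0.
rewrite (_ : 9 / 10 = 3 / 5 / w); last by rewrite /w; field.
by rewrite expr_div_n mulrA ler_pdivlMr ?exprn_gt0 // (le_trans markov).
Qed.
End RandomBits.

Section Tournament.
Variables (k n r : nat) (hrk : (r < k)%N).

Definition tuple_edge (g : rtuple r n * 'I_n) (i : 'I_r) : xpair k n :=
  exist _ (vtx_of_tuple hrk g.1 i, (nextcls hrk, g.2)) (ltn_ord i).

Definition forward_pattern (pi : {ffun vert k n -> 'I_(k * n)})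
    (g : rtuple r n * 'I_n) : {ffun 'I_r -> bool} :=
  [ffun i => (pi (vtx_of_tuple hrk g.1 i) < pi (nextcls hrk, g.2))%N].

Lemma arc_xpair (T : orient k n) (p : xpair k n) :
  Defs.arc T (val p).1 (val p).2 = T p /\ Defs.arc T (val p).2 (val p).1 = ~~ T p.
Proof.
case: p => [[u v] uv]; rewrite /Defs.arc /=; split; first by rewrite insubT.
by rewrite insubF ?insubT //= ltnNge ltnW.
Qed.

Lemma Ledge_tuple_edge (T : orient k n) (pi : {ffun vert k n -> 'I_(k * n)})
    (g : rtuple r n * 'I_n) (i : 'I_r) :
  injective pi ->
  Ledge T pi (vtx_of_tuple hrk g.1 i) (nextcls hrk, g.2) =
  (T (tuple_edge g i) == forward_pattern pi g i).
Proof.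
move=> pi_inj; rewrite /Ledge; have /= [-> ->] := arc_xpair T (tuple_edge g i).
have : pi (vtx_of_tuple hrk g.1 i) != pi (nextcls hrk, g.2).
  rewrite (inj_eq pi_inj); apply/eqP => /(congr1 (fun x => val x.1)) /= i_eq_r.
  by move: (ltn_ord i); rewrite i_eq_r ltnn.
by rewrite ffunE -val_eqE; case: ltngtP => // _ _; case: (T _).
Qed.

Lemma Ladj_restrict (T : orient k n) (pi : {ffun vert k n -> 'I_(k * n)})
    (g : rtuple r n * 'I_n) :
  injective pi ->
  Ladj hrk T pi g.1 g.2 = (restrict (tuple_edge g) T == forward_pattern pi g).
Proof.
move=> pi_inj; apply/forallP/eqP => [Ladj_g | pat i].
  by apply/ffunP => i; rewrite ffunE; apply/eqP; rewrite -Ledge_tuple_edge.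
by rewrite Ledge_tuple_edge // -pat ffunE.
Qed.

Definition disjoint_tuples (R : {set rtuple r n}) : bool :=
  [forall p in R, forall q in R, (p != q) ==> [forall i, p i != q i]].

Lemma disjoint_tuplesP (R : {set rtuple r n}) :
  reflect {in R &, forall p q : rtuple r n, forall i, p i = q i -> p = q}
    (disjoint_tuples R).
Proof.
apply: (iffP forall_inP) => [disjR p q pR qR i pq | disjR p pR].
  apply: contraTeq (disjR p pR) => neq_pq; apply/forall_inPn; exists q => //.
  by rewrite neq_pq /=; apply/forallPn; exists i; rewrite pq eqxx.
apply/forall_inP => q qR; apply/implyP; apply: contra_neqT => /forallPn [i].
by rewrite negbK => /eqP /(disjR p q pR qR).
Qed.

Lemma edges_between_count (T : orient k n) (pi : {ffun vert k n -> 'I_(k * n)})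
    (R : {set rtuple r n}) (S : {set 'I_n}) :
  injective pi ->
  edges_between hrk T pi R S =
  count (fun g => restrict (tuple_edge g) T == forward_pattern pi g) (enum (setX R S)).
Proof.
move=> pi_inj; rewrite /edges_between -sum1_card -sum1_count big_enum_cond.
by apply: eq_bigl => g; rewrite !inE Ladj_restrict.
Qed.

Lemma card_eventX_le (RR : realType) (pi : {ffun vert k n -> 'I_(k * n)})
    (R : {set rtuple r n}) (S : {set 'I_n}) :
  injective pi -> disjoint_tuples R ->
  #|[set T | eventX RR hrk T pi R S]|%:R <=
  #|{: orient k n}|%:R * (9 / 10) ^+ (#|R| * #|S| %/ (2 * 2 ^ r)) :> RR.
Proof.
move=> pi_inj /disjoint_tuplesP disjR; set a := (_ %/ _)%N.
apply: le_trans (@card_count_restrict_le _ _ RR _ (enum (setX R S)) tuple_edge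
  (forward_pattern pi) a (enum_uniq _) _ _ _).
- rewrite ler_nat; apply/subset_leq_card/subsetP => T; rewrite !inE /eventX.
  rewrite -edges_between_count // ltr_pdivlMr ?exprn_gt0 // -natrX -natrM ltr_nat.
  by rewrite expnS /a leq_divRL ?muln_gt0 ?expn_gt0 // => /ltnW.
- by move=> g _ i i' /(congr1 (fun e => val (val e).1.1)) /= /val_inj.
- move=> [p j] [p' j']; rewrite !mem_enum !inE /= => /andP [pR _] /andP [p'R _].
  move=> i i' /(congr1 val) [/val_inj eq_i]; rewrite -{}eq_i.
  by move=> /(disjR p p' pR p'R) -> ->.
- by rewrite -cardE cardsX mulnC leq_trunc_div.
Qed.
End Tournament.

Section Configurations.
Variables (k n r : nat).

Definition config :=
  ({ffun vert k n -> 'I_(k * n)} * {ffun 'I_n -> option (rtuple r n)} * {set 'I_n})%type.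

Definition tuples_of (f : {ffun 'I_n -> option (rtuple r n)}) : {set rtuple r n} :=
  [set p | Some p \in codom f].

Lemma tuples_of_disjoint (R : {set rtuple r n}) :
  (0 < r)%N -> disjoint_tuples R -> exists f, tuples_of f = R.
Proof.
move=> r_gt0 /disjoint_tuplesP disjR; pose i0 := Ordinal r_gt0.
exists [ffun j => [pick p in R | p i0 == j]]; apply/setP => p; rewrite inE.
apply/codomP/idP => [[j] | pR].
  by rewrite ffunE; case: pickP => [q /andP [qR _] [->] | //].
exists (p i0); rewrite ffunE; case: pickP => [q /andP [qR /eqP q_i0] | /(_ p)].
  by rewrite (disjR p q pR qR i0 (esym q_i0)).
by rewrite pR eqxx.
Qed.

Lemma card_config : #|{: config}| = ((k * n) ^ (k * n) * (n ^ r + 1) ^ n * 2 ^ n)%N.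
Proof.
rewrite !card_prod !card_ffun card_option card_ffun !card_ord addn1.
by rewrite card_prod !card_ord -cardsT -powersetT card_powerset cardsT card_ord.
Qed.
End Configurations.

Section BadEvent.
Variables (RR : realType) (eps : RR) (k n r : nat) (hrk : (r < k)%N).

Definition config_event (t : config k n r) (T : orient k n) : bool :=
  let: (pi, f, S0) := t in
  [&& injectiveb pi, disjoint_tuples (tuples_of f),
      eps * n%:R <= #|tuples_of f|%:R, eps * n%:R <= #|S0|%:R
    & eventX RR hrk T pi (tuples_of f) S0].

Lemma bad_config_event (T : orient k n) :
  (0 < r)%N -> @bad RR eps k n r hrk T -> exists t, config_event t T.
Proof.
move=> r_gt0 /existsP [pi /existsP [P /existsP [R /existsP [S]]]].
case/and5P => pi_inj /andP [_ perfP] RP epsR /andP [epsS XT].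
have disjR : disjoint_tuples R.
  apply/forall_inP => p pR; move/forall_inP: perfP => /(_ p (subsetP RP p pR)).
  by move=> /forall_inP perfP_p; apply/forall_inP => q /(subsetP RP); apply: perfP_p.
have [f Rf] := tuples_of_disjoint r_gt0 disjR.
by exists (pi, f, S); rewrite /= Rf pi_inj disjR epsR epsS.
Qed.

(* The constant 14 = 2 * 7 leaves room for (9/10)^7 <= 1/2. *)
Lemma card_config_event_le (t : config k n r) (d : nat) :
  (0 < d)%N -> 1 <= d%:R * eps ->
  #|[set T | config_event t T]|%:R <=
  #|{: orient k n}|%:R * (1 / 2) ^+ (n ^ 2 %/ (14 * 2 ^ r * d ^ 2)) :> RR.
Proof.
move=> d_gt0 d_eps; case: t => [[pi f] S]; set b := (_ %/ _)%N.
have [adm | not_adm] := boolP [&& injectiveb pi, disjoint_tuples (tuples_of f),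
  eps * n%:R <= #|tuples_of f|%:R & eps * n%:R <= #|S|%:R]; last first.
  suff -> : [set T | config_event (pi, f, S) T] = set0.
    by rewrite cards0 mulr0n mulr_ge0 ?exprn_ge0 ?ler0n //; lra.
  apply/setP => T; rewrite !inE; apply: contraNF not_adm.
  by case/and5P => -> -> -> -> _.
have /and4P [/injectiveP pi_inj disjR epsR epsS] := adm.
apply: le_trans (_ : _ <= #|[set T | eventX RR hrk T pi (tuples_of f) S]|%:R) _.
  by rewrite ler_nat subset_leq_card //; apply/subsetP => T; rewrite !inE => /and5P [].
apply: le_trans (card_eventX_le _ _ _ pi_inj disjR) _; rewrite ler_wpM2l ?ler0n //.
apply: le_trans (_ : _ <= (9 / 10) ^+ (7 * b)) _.
  apply: ler_wiXn2l; [lra | lra | apply: sq_div_leq_mul_div => //].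
    exact: leq_mul_of_eps_le epsR.
  exact: leq_mul_of_eps_le epsS.
by rewrite exprM; apply: lerXn2r; rewrite ?nnegrE ?exprn_ge0 //; lra.
Qed.

Lemma prob_bad_le (d : nat) :
  (0 < r)%N -> (0 < d)%N -> 1 <= d%:R * eps ->
  prob RR (@bad RR eps k n r hrk) <=
  #|{: config k n r}|%:R * (1 / 2) ^+ (n ^ 2 %/ (14 * 2 ^ r * d ^ 2)).
Proof.
move=> r_gt0 d_gt0 d_eps.
have Omega_gt0 : 0 < #|{: orient k n}|%:R :> RR.
  by rewrite ltr0n; apply/card_gt0P; exists [ffun=> true].
rewrite /prob ler_pdivrMr //.
apply: le_trans (_ : _ <= \sum_(t : config k n r) #|[set T | config_event t T]|%:R) _.
  by rewrite -natr_sum ler_nat; apply: card_le_sum_cover => T /bad_config_event; apply.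
apply: le_trans (ler_sum _ (fun t _ => card_config_event_le t d_gt0 d_eps)) _.
by rewrite sumr_const -[(_ * _) *+ _]mulr_natl mulrA mulrAC.
Qed.
End BadEvent.

Lemma card_config_eventually_le (k r D : nat) :
  (0 < k)%N -> (0 < r)%N -> (0 < D)%N ->
  exists N, forall n, (N <= n)%N ->
  (k * n * ((k * n) ^ (k * n) * (n ^ r + 1) ^ n * 2 ^ n) <= 2 ^ (n ^ 2 %/ D))%N.
Proof.
move=> k_gt0 r_gt0 D_gt0; set B := (k + r + 2)%N; set K := (D * B)%N.
have K_gt0 : (0 < K)%N by rewrite muln_gt0 D_gt0 addn_gt0 orbT.
exists (K * (2 * (2 * k) * K + 4))%N => n n_ge.
have n_gt0 : (0 < n)%N.
  by apply: leq_trans n_ge; rewrite muln_gt0 K_gt0 addn_gt0 orbT.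
set Q := (2 * k * n)%N.
have Q_ge2 : (2 <= Q)%N by rewrite /Q -mulnA leq_pmulr ?muln_gt0 ?k_gt0.
have kn_le : (k * n <= Q)%N by rewrite /Q -mulnA leq_pmull.
have tuples_le : (n ^ r + 1 <= Q ^ r)%N.
  apply: leq_trans (_ : (2 * n) ^ r <= _)%N; last first.
    by apply: leq_exp2rW; rewrite /Q leq_mul2r leq_pmulr ?orbT.
  have : (2 <= 2 ^ r)%N by rewrite -{1}(expn1 2) leq_pexp2l.
  have : (1 <= n ^ r)%N by rewrite expn_gt0 n_gt0.
  rewrite expnMn; nia.
apply: leq_trans (_ : Q ^ (B * n) <= _)%N.
  apply: leq_trans (_ : Q ^ (1 + k * n + r * n + n) <= _)%N; last first.
    by rewrite leq_pexp2l ?(ltnW Q_ge2) // /B !mulnDl; nia.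
  rewrite !expnD expn1 !mulnA [(Q ^ (r * n))%N]expnM.
  apply: leq_mul; first apply: leq_mul; first apply: leq_mul.
  - exact: kn_le.
  - exact: leq_exp2rW kn_le.
  - exact: leq_exp2rW tuples_le.
  - exact: leq_exp2rW Q_ge2.
apply: leq_trans (leq_exp2rW _ (mul_leq_exp2_div K_gt0 n_ge)) _.
rewrite -expnM leq_pexp2l // leq_divRL //.
have -> : (n %/ K * (B * n) * D = n %/ K * K * n)%N by rewrite /K; ring.
by rewrite -mulnn leq_mul2r leq_trunc_div orbT.
Qed.

Theorem lemma4p4 (RR : realType) (k : nat) (hk : (2 <= k)%N)
  (eps : RR) (heps : (0 < eps)%R) (r : nat) (hr1 : (1 <= r)%N) (hrk : (r < k)%N) :
  exists N : nat, forall n : nat, (N <= n)%N ->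
    (prob RR (@bad RR eps k n r hrk) <= 1 / (k * n)%:R)%R.
Proof.
have [d d_eps] : exists d : nat, 1 <= d%:R * eps.
  exists (Num.Def.archi_bound eps^-1).
  by rewrite -ler_pdivrMr // mul1r ltW // archi_boundP // invr_ge0 ltW.
have d_gt0 : (0 < d)%N by case: d d_eps => [|//]; rewrite mul0r ler10.
have [|||N N_large] := @card_config_eventually_le k r (14 * 2 ^ r * d ^ 2).
- exact: leq_trans hk.
- exact: hr1.
- by rewrite !muln_gt0 !expn_gt0 d_gt0.
exists N.+1 => n n_gt; have n_gt0 : (0 < n)%N := leq_trans (ltn0Sn _) n_gt.
have kn_gt0 : 0 < (k * n)%:R :> RR by rewrite ltr0n muln_gt0 n_gt0 (leq_trans _ hk).
apply: le_trans (prob_bad_le n hrk hr1 d_gt0 d_eps) _.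
rewrite expr_div_n expr1n mulrA mulr1 ler_pdivrMr ?exprn_gt0 // mulrAC mul1r.
rewrite ler_pdivlMr // -natrX -natrM ler_nat card_config mulnC.
exact/N_large/ltnW.
Qed.
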